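(* Let $f:\mathbb N\to\{0,1\}$ and let $\theta$ be a closed term with $\theta\Vdash\exists n^{\mathbb N}(f(n)=1)$. Then $\theta\star p\cdot\pi_0\succ p\star\underline n\cdot\varpi$ for some integer $n$ with $f(n)=1$ and some stack $\varpi$.
   Context: Fix an integer $N\ge 0$. The set $\Lambda$ of terms is the smallest set containing the constants $B,C,I,K,W,cc,A$ and $p,q_0,\dots,q_N$, closed under application $(\xi)\eta$ (written $\xi\eta$), and containing, for each sequence $(\xi_i)_{i\in\mathbb N}$ of closed terms (no occurrence of $p,q_0,\dots,q_N$), a constant $\bigwedge_i\xi_i$ (injectively, well-founded). Stacks: finite sequences $t_0\cdot\ldots\cdot t_{n-1}\cdot\pi_0$ of terms, $\pi_0$ the empty stack; $\Pi$ the set of stacks. $\ell_t=((C)(B)CB)t$, $k_{\pi_0}=A$, $k_{t\cdot\pi}=(\ell_t)k_\pi$; $\sigma=(BW)(C)(B)BB$, $\underline0=(K)I$, $\underline{n+1}=(\sigma)\underline n$. Execution $\succ$: least preorder on $\Lambda\times\Pi$ with $(\xi)\eta\star\pi\succ\xi\star\eta\cdot\pi$; $B\star\xi\cdot\eta\cdot\zeta\cdot\pi\succ\xi\star(\eta)\zeta\cdot\pi$; $C\star\xi\cdot\eta\cdot\zeta\cdot\pi\succ\xi\star\zeta\cdot\eta\cdot\pi$; $I\star\xi\cdot\pi\succ\xi\star\pi$; $K\star\xi\cdot\eta\cdot\pi\succ\xi\star\pi$; $W\star\xi\cdot\eta\cdot\pi\succ\xi\star\eta\cdot\eta\cdot\pi$;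 $cc\star\xi\cdot\pi\succ\xi\star k_\pi\cdot\pi$; $A\star\xi\cdot\pi\succ\xi\star\pi_0$; $\bigwedge_i\xi_i\star\underline n\cdot\pi\succ\xi_n\star\pi$. Pole $\perp\!\!\!\perp=\{\xi\star\pi:\exists\varpi,\ \xi\star\pi\succ p\star\varpi\}$. Realizability (Krivine): $\xi\Vdash F$ iff $\xi\star\pi\in\perp\!\!\!\perp$ for all $\pi\in\|F\|$, where $\|\bot\|=\Pi$, $\|\top\|=\emptyset$, $\|A\to B\|=\{\eta\cdot\pi:\eta\Vdash A,\pi\in\|B\|\}$, $\|\forall n^{\mathbb N}F[n]\|=\{\underline n\cdot\pi:n\in\mathbb N,\pi\in\|F[n]\|\}$; $\neg A$ is $A\to\bot$ and $\exists n^{\mathbb N}F[n]$ is $\neg\forall n^{\mathbb N}\neg F[n]$. For a function $f$ of the ground model, the formula $f(n)\neq1$ has falsity value $\|\bot\|=\Pi$ if $f(n)=1$ and $\|\top\|=\emptyset$ if $f(n)\neq1$. *)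

From Stdlib Require Import List Relations Fin.
Import ListNotations.
Set Implicit Arguments.

(* Closed terms: built from B,C,I,K,W,cc,A by application and the
   constants /\_i xi_i for sequences of closed terms. *)
Inductive cterm : Type :=
| cB | cC | cI | cK | cW | ccc | cA
| capp : cterm -> cterm -> cterm
| cbig : (nat -> cterm) -> cterm.

(* The set Lambda of all terms, for a fixed N: additionally p, q_0..q_N. *)
Inductive term (N : nat) : Type :=
| tB | tC | tI | tK | tW | tcc | tA
| tp
| tq : Fin.t (S N) -> term N
| tapp : term N -> term N -> term N
| tbig : (nat -> cterm) -> term N.

Arguments tB {N}. Arguments tC {N}. Arguments tI {N}. Arguments tK {N}.
Arguments tW {N}. Arguments tcc {N}. Arguments tA {N}. Arguments tp {N}.
Arguments tq {N} _. Arguments tapp {N} _ _. Arguments tbig {N} _.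

Fixpoint emb {N : nat} (c : cterm) : term N :=
  match c with
  | cB => tB | cC => tC | cI => tI | cK => tK | cW => tW | ccc => tcc | cA => tA
  | capp a b => tapp (emb a) (emb b)
  | cbig f => tbig f
  end.

(* Stacks: finite sequences of terms; [] is pi_0. *)
Definition stack (N : nat) := list (term N).

Definition ell {N : nat} (t : term N) : term N :=
  tapp (tapp tC (tapp (tapp tB tC) tB)) t.

Fixpoint kont {N : nat} (pi : stack N) : term N :=
  match pi with
  | [] => tA
  | t :: pi' => tapp (ell t) (kont pi')
  end.

Definition sigma {N : nat} : term N :=
  tapp (tapp tB tW) (tapp tC (tapp (tapp tB tB) tB)).

Fixpoint numeral {N : nat} (n : nat) : term N :=
  match n with
  | 0 => tapp tK tI
  | S m => tapp sigma (numeral m)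
  end.

Definition process (N : nat) := (term N * stack N)%type.

Inductive step {N : nat} : process N -> process N -> Prop :=
| st_app : forall xi eta pi, step (tapp xi eta, pi) (xi, eta :: pi)
| st_B : forall xi eta zeta pi, step (tB, xi :: eta :: zeta :: pi) (xi, tapp eta zeta :: pi)
| st_C : forall xi eta zeta pi, step (tC, xi :: eta :: zeta :: pi) (xi, zeta :: eta :: pi)
| st_I : forall xi pi, step (tI, xi :: pi) (xi, pi)
| st_K : forall xi eta pi, step (tK, xi :: eta :: pi) (xi, pi)
| st_W : forall xi eta pi, step (tW, xi :: eta :: pi) (xi, eta :: eta :: pi)
| st_cc : forall xi pi, step (tcc, xi :: pi) (xi, kont pi :: pi)
| st_A : forall xi pi, step (tA, xi :: pi) (xi, [])
| st_big : forall g n pi, step (tbig g, numeral n :: pi) (emb (g n), pi).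

Definition exec {N : nat} : process N -> process N -> Prop :=
  clos_refl_trans (process N) step.

Definition pole {N : nat} (xi : term N) (pi : stack N) : Prop :=
  exists varpi, exec (xi, pi) (tp, varpi).

Inductive formula : Type :=
| FBot | FTop
| FImp : formula -> formula -> formula
| FAllN : (nat -> formula) -> formula.

Fixpoint falsity {N : nat} (F : formula) : stack N -> Prop :=
  match F with
  | FBot => fun _ => True
  | FTop => fun _ => False
  | FImp A B => fun pi => exists eta pi', pi = eta :: pi' /\
        (forall rho, falsity A rho -> pole eta rho) /\ falsity B pi'
  | FAllN G => fun pi => exists n pi', pi = numeral n :: pi' /\ falsity (G n) pi'
  end.

Definition realizes {N : nat} (xi : term N) (F : formula) : Prop :=
  forall pi, falsity F pi -> pole xi pi.

Definition FNeg (A : formula) : formula := FImp A FBot.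

(* The atomic formula f(n) <> 1 : falsity Pi if f n = 1, empty otherwise. *)
Definition neq1 (f : nat -> nat) (n : nat) : formula :=
  if Nat.eqb (f n) 1 then FBot else FTop.

(* exists n^N (f(n) = 1)  :=  not forall n^N not (f(n)=1), with
   not (f(n) = 1) being the formula f(n) <> 1. *)
Definition exists_f1 (f : nat -> nat) : formula :=
  FNeg (FAllN (fun n => neq1 f n)).

(* Realize [forall n, f(n) <> 1] by the closed-up-to-p term [eta = C (/\_n g_n) p],
   where [g_n] is [I] when [f n = 1] and the diverging [(A)I] otherwise: on [n . rho]
   it reaches [p] exactly when [f n = 1].  Hence [theta * eta . pi_0] reaches [p].
   Since [theta] is closed, that run is the run of [theta * p . pi_0] with [p]
   replaced by [eta], until [p] itself comes into head position; from there [eta]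
   must reach [p], so the stack then starts with a numeral [n] with [f n = 1]. *)

From Stdlib Require Import List Relations.
Import ListNotations.

Section SubstP.

Context {N : nat}.

Fixpoint subst_p (e t : term N) : term N :=
  match t with
  | tp => e
  | tapp a b => tapp (subst_p e a) (subst_p e b)
  | _ => t
  end.

Fixpoint p_free (t : term N) : Prop :=
  match t with
  | tp => False
  | tapp a b => p_free a /\ p_free b
  | _ => True
  end.

Lemma subst_p_emb (e : term N) (c : cterm) : subst_p e (emb c) = emb c.
Proof. induction c; simpl; congruence. Qed.

Lemma p_free_numeral (n : nat) : p_free (numeral n).
Proof. induction n; simpl; tauto. Qed.

Lemma subst_p_kont (e : term N) (pi : stack N) :
  subst_p e (kont pi) = kont (map (subst_p e) pi).
Proof. induction pi as [|t pi IH]; simpl; rewrite ?IH; reflexivity. Qed.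

Variable e : term N.
Hypothesis e_not_p_free : ~ p_free e.

(* Fails when [e] is p-free: then [subst_p e tp = e]. *)
Lemma subst_p_eq_p_free (x y : term N) : p_free y -> subst_p e x = y -> x = y.
Proof.
  revert y; induction x; intros y Hy Hxy; subst y; simpl in *; try tauto.
  destruct Hy; f_equal; auto.
Qed.

Lemma step_subst_p_reflect (t : term N) (pi : stack N) (Y : process N) :
  t <> tp -> step (subst_p e t, map (subst_p e) pi) Y ->
  exists t' pi', step (t, pi) (t', pi') /\ Y = (subst_p e t', map (subst_p e) pi').
Proof.
  intros Ht Hs.
  destruct t; try contradiction; inversion Hs; subst;
    repeat match goal with
    | H : _ :: _ = map _ _ |- _ => symmetry in H
    | H : map _ _ = _ :: _ |- _ => apply map_eq_cons in H as (? & ? & -> & ? & H)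
    end; subst.
  all: try (do 2 eexists; split; [constructor | reflexivity]).
  - do 2 eexists; split; [constructor | simpl; rewrite subst_p_kont; reflexivity].
  - match goal with H : subst_p e _ = numeral _ |- _ =>
      apply subst_p_eq_p_free in H; [subst | apply p_free_numeral] end.
    do 2 eexists; split; [constructor | simpl; rewrite subst_p_emb; reflexivity].
Qed.

(* The run of [subst_p e t * subst_p e pi] shadows that of [t * pi] until [p]
   reaches head position, where [e] takes over. *)
Lemma exec_subst_p_reflect (t : term N) (pi : stack N) (Q : process N) :
  exec (subst_p e t, map (subst_p e) pi) Q -> fst Q = tp ->
  exists varpi, exec (t, pi) (tp, varpi) /\ exec (e, map (subst_p e) varpi) Q.
Proof.
  intros Hex HQ; apply clos_rt_rt1n in Hex.
  remember (subst_p e t, map (subst_p e) pi) as P eqn:HP.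
  revert t pi HP; induction Hex as [P | P Y Q Hs Hrest IH]; intros t pi ->.
  all: assert (Htp : t = tp \/ t <> tp)
         by (destruct t; (left; reflexivity) || (right; discriminate)).
  all: destruct Htp as [-> | Ht].
  - exists pi; split; apply rt_refl.
  - destruct t; simpl in HQ; congruence.
  - exists pi; split; [apply rt_refl | apply clos_rt1n_rt; econstructor; eassumption].
  - destruct (step_subst_p_reflect _ _ _ Ht Hs) as (t' & pi' & Hstep & ->).
    destruct (IH HQ t' pi' eq_refl) as (varpi & Hrun & He).
    exists varpi; split; [eapply rt_trans; [apply rt_step |] |]; eassumption.
Qed.

End SubstP.

Section Refuter.

Variable f : nat -> nat.

(* [(A)I] discards the stack and then idles at [I * pi_0], never reaching [p]. *)
Definition selector (n : nat) : cterm :=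
  if Nat.eqb (f n) 1 then cI else capp cA cI.

Definition refuter {N : nat} : term N := tapp (tapp tC (tbig selector)) tp.

Lemma refuter_realizes_neq1 (N : nat) : @realizes N refuter (FAllN (neq1 f)).
Proof.
  intros pi (n & rho & -> & Hfalse); exists rho.
  unfold neq1 in Hfalse; destruct (Nat.eqb (f n) 1) eqn:Hfn; [| contradiction].
  eapply rt_trans; [apply rt_step, st_app |].
  eapply rt_trans; [apply rt_step, st_app |].
  eapply rt_trans; [apply rt_step, st_C |].
  eapply rt_trans; [apply rt_step, st_big |].
  unfold selector; rewrite Hfn; apply rt_step, st_I.
Qed.

Ltac invert_first_step :=
  match goal with H : clos_refl_trans_1n _ _ _ _ |- _ =>
    let Hs := fresh "Hs" in
    inversion H as [| ? ? Hs ?]; subst; clear H;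
    [simpl in *; discriminate | inversion Hs; subst; clear Hs]
  end.

Lemma refuter_not_p_free (N : nat) : ~ p_free (@refuter N).
Proof. simpl; tauto. Qed.

Lemma refuter_exec_p (N : nat) (sig : stack N) (Q : process N) :
  exec (refuter, sig) Q -> fst Q = tp ->
  exists n sig', sig = numeral n :: sig' /\ f n = 1.
Proof.
  intros Hex HQ; apply clos_rt_rt1n in Hex.
  do 4 invert_first_step.
  eexists _, _; split; [reflexivity |].
  unfold selector in *; destruct (Nat.eqb (f n) 1) eqn:Hfn.
  - apply PeanoNat.Nat.eqb_eq, Hfn.
  - simpl in *; repeat invert_first_step.
Qed.

End Refuter.

Theorem proposition1 (N : nat) (f : nat -> nat) (theta : cterm) :
  (forall n, f n = 0 \/ f n = 1) ->
  @realizes N (emb theta) (exists_f1 f) ->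
  exists (n : nat) (varpi : stack N),
    f n = 1 /\ exec (emb theta, [tp]) (tp, numeral n :: varpi).
Proof.
  intros _ Htheta.
  assert (Hpole : @pole N (emb theta) [refuter f]).
  { apply Htheta; exists (refuter f), []; repeat split.
    apply refuter_realizes_neq1. }
  destruct Hpole as [rho Hrun].
  rewrite <- (subst_p_emb (refuter f) theta) in Hrun.
  destruct (exec_subst_p_reflect _ (refuter_not_p_free f N) _ [tp] _ Hrun eq_refl)
    as (varpi & Hreach & Hrefuter).
  destruct (refuter_exec_p f _ _ _ Hrefuter eq_refl) as (n & sig & Hsig & Hfn).
  destruct varpi as [| a varpi]; [discriminate |].
  injection Hsig as Ha _.
  apply subst_p_eq_p_free in Ha; [subst a | apply refuter_not_p_free | apply p_free_numeral].
  exists n, varpi; split; assumption.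
Qed.
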